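(* In the random order model, algorithm Random achieves an asymptotic approximation ratio of at most $3/4$ for one-sided bipartite matching.
   Context: One-sided bipartite matching: offline vertices are known in advance; online vertices arrive one at a time, each with its set of offline neighbours, and must be irrevocably matched to an unmatched neighbour or left unmatched; the goal is a maximum-size matching. Algorithm Random: when an online vertex arrives, if it has unmatched neighbours, match it to one of them chosen uniformly at random. Random order model (ROM): the adversary chooses the graph, and the arrival order of the online vertices is a uniformly random permutation. The asymptotic approximation ratio of $\mathbb{A}$ in ROM is $\liminf_{n}\inf_{I\in\mathcal{I}_n} \mathbb{E}[v(\mathbb{A},I(\sigma))]/v(I)$, where the expectation is over the uniformly random permutation $\sigma$ of the $n$ data items (and the algorithm's randomness), and $v(I)$ is the maximum matching size. *)

From HB Require Import structures.
From mathcomp Require Import all_boot all_order all_algebra all_fingroup.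
From mathcomp Require Import all_classical all_reals all_analysis.
Set Implicit Arguments. Unset Strict Implicit. Unset Printing Implicit Defensive.
Import Order.TTheory GRing.Theory Num.Theory.
Local Open Scope ring_scope.

(* An instance with n online vertices ('I_n, the data items) and an arbitrary
   finite number [offl] of offline vertices ('I_offl); [nbr i] is the set of
   offline neighbours of online vertex i. *)
Record instance (n : nat) := Instance {
  offl : nat;
  nbr : 'I_n -> {set 'I_offl}
}.

Definition is_matching n (I : instance n) (F : {set 'I_n * 'I_(offl I)}) : bool :=
  [forall e in F, e.2 \in nbr I e.1] &&
  [forall e in F, forall f in F, ((e.1 == f.1) || (e.2 == f.2)) ==> (e == f)].

Definition opt n (I : instance n) : nat :=
  \max_(F : {set 'I_n * 'I_(offl I)} | is_matching F) #|F|.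

(* Expected number of matches made by algorithm Random when the online vertices
   arrive with neighbour sets given by the sequence [s], and the offline
   vertices in [M] are already matched. On arrival, if the set A of unmatched
   neighbours is nonempty, one of them is chosen uniformly at random. *)
Fixpoint rand_val (R : realType) (m : nat) (s : seq {set 'I_m}) (M : {set 'I_m}) : R :=
  match s with
  | [::] => 0
  | N :: s' =>
      let A := N :\: M in
      if A == finset.set0 then rand_val R s' M
      else 1 + (#|A|%:R)^-1 * \sum_(u in A) rand_val R s' (u |: M)
  end.

(* E[v(Random, I(sigma))]: average over uniformly random arrival orders
   sigma (position k receives online vertex sigma k). *)
Definition exp_random (R : realType) n (I : instance n) : R :=
  (#|{perm 'I_n}|%:R)^-1 *
  \sum_(sigma : {perm 'I_n})
     rand_val R [seq nbr I (sigma k) | k <- enum 'I_n] finset.set0.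

Definition ratio (R : realType) n (I : instance n) : R :=
  exp_random R I / (opt I)%:R.

(* inf over instances with n data items (with v(I) > 0, so the ratio is
   defined) of E[v(Random, I(sigma))]/v(I). *)
Definition ratio_inf (R : realType) (n : nat) : R :=
  inf [set r : R | exists I : instance n, (0 < opt I)%N /\ ratio R I = r].

Definition asymptotic_ratio_random (R : realType) : R :=
  limn_inf (fun n => ratio_inf R n).

(* Seven online "stars" s_i are adjacent to a private offline vertex p_i and to all seven
   offline "hubs" h_j, seven online "leaves" l_j are adjacent to h_j alone, and any further
   online vertices are isolated; the perfect matching s_i p_i, l_j h_j has size 14.  Random
   loses a vertex whenever a star takes a hub before the leaf of that hub arrives.  Under a
   random order, the expected future gain depends only on the numbers a of unserved stars,
   x of unserved leaves whose hub is free (this is also the number of free hubs) and z of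
   unserved leaves whose hub is taken, and it satisfies
     (a + x + z) U(a,x,z) = a (1 + (U(a-1,x,z) + x U(a-1,x-1,z+1)) / (1 + x))
                            + x (1 + U(a,x-1,z)) + z U(a,x,z-1).
   A table of upper bounds on U, in units of 10^-6 and checked by computation, gives
   U(7,7,0) <= 10.4853 < 3/4 * 14. *)

From Stdlib Require Import NArith.
From Pilot Require Import Defs.
From HB Require Import structures.
From mathcomp Require Import all_boot all_order all_algebra all_fingroup.
From mathcomp Require Import all_classical all_reals all_analysis.
From mathcomp Require Import ring lra zify.
Set Implicit Arguments. Unset Strict Implicit. Unset Printing Implicit Defensive.
Import Order.TTheory GRing.Theory Num.Theory.
Local Open Scope ring_scope.

(** * Random in the random order model *)

Lemma sum_perm_first (V : nmodType) n (F : 'S_n.+1 -> V) (i : 'I_n.+1) :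
  \sum_(s : 'S_n.+1 | s ord0 == i) F s = \sum_(t : 'S_n) F (lift_perm ord0 i t).
Proof.
pose tail (s : 'S_n.+1) k := odflt k (unlift (s ord0) (s (lift ord0 k))).
have tailK (s : 'S_n.+1) k : lift (s ord0) (tail s k) = s (lift ord0 k).
  rewrite /tail; have := neq_lift ord0 k.
  by rewrite -(can_eq (permK s)) => /unlift_some[? ? ->].
have tail_inj (s : 'S_n.+1) : injective (tail s).
  by move=> k1 k2 /(congr1 (lift (s ord0))); rewrite !tailK => /perm_inj/lift_inj.
rewrite (reindex (lift_perm ord0 i)); last first.
  exists (fun s => perm (tail_inj s)) => [t _ | s /eqP si].
    by apply/permP => k; rewrite permE /tail lift_perm_lift lift_perm_id liftK.
  apply/permP => k; case: (unliftP ord0 k) => [k'|] ->; rewrite ?lift_perm_id //.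
  by rewrite lift_perm_lift permE -si tailK.
by apply: eq_bigl => t; rewrite lift_perm_id eqxx.
Qed.

Section RandomOrder.
Variables (R : realType) (m : nat).

Definition arrive (B : {set 'I_m}) (g : {set 'I_m} -> R) (M : {set 'I_m}) : R :=
  let A := B :\: M in
  if A == finset.set0 then g M else 1 + (#|A|%:R)^-1 * \sum_(u in A) g (u |: M).

Fixpoint rom_value n : ('I_n -> {set 'I_m}) -> {set 'I_m} -> R :=
  match n with
  | 0 => fun _ _ => 0
  | n'.+1 => fun f M =>
      (n'.+1%:R)^-1 * \sum_(i < n'.+1) arrive (f i) (rom_value (fun j => f (lift i j))) M
  end.

Lemma rand_val_cons B s M : rand_val R (B :: s) M = arrive B (rand_val R s) M.
Proof. by []. Qed.

Lemma sum_arrive (T : finType) B (g : T -> {set 'I_m} -> R) G M :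
  (forall M', \sum_t g t M' = #|T|%:R * G M') ->
  \sum_t arrive B (g t) M = #|T|%:R * arrive B G M.
Proof.
move=> gG; rewrite /arrive; case: ifP => _; first exact: gG.
rewrite big_split /= sumr_const -big_distrr exchange_big /=.
under eq_bigr do rewrite gG.
by rewrite -big_distrr mulrDr mulr1 mulrCA mulr_natl.
Qed.

Lemma sum_rand_val_perm n (f : 'I_n -> {set 'I_m}) M :
  \sum_(s : 'S_n) rand_val R [seq f (s k) | k <- enum 'I_n] M = n`!%:R * rom_value f M.
Proof.
elim: n f M => [|n IH] f M.
  by rewrite mulr0 big1 // => s _; rewrite enum_ord0.
rewrite (partition_big (fun s : 'S_n.+1 => s ord0) xpredT) //=.
have first_arrival i :
    \sum_(s : 'S_n.+1 | s ord0 == i) rand_val R [seq f (s k) | k <- enum 'I_n.+1] M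
    = n`!%:R * arrive (f i) (rom_value (fun j => f (lift i j))) M.
  have split_first (t : 'S_n) : [seq f (lift_perm ord0 i t k) | k <- enum 'I_n.+1]
      = f i :: [seq f (lift i (t k)) | k <- enum 'I_n].
    rewrite enum_ordSl /= lift_perm_id -map_comp; congr (_ :: _).
    by apply: eq_map => k /=; rewrite lift_perm_lift.
  rewrite sum_perm_first; under eq_bigr do rewrite split_first rand_val_cons.
  by rewrite -card_Sn; apply: sum_arrive => M'; rewrite card_Sn -IH.
under eq_bigr do rewrite first_arrival.
rewrite -big_distrr /= factS natrM -mulrA [in RHS]mulrCA.
by rewrite mulVKf ?pnatr_eq0.
Qed.

End RandomOrder.

Lemma exp_random_rom (R : realType) n (I : instance n) :
  exp_random R I = rom_value R (nbr I) finset.set0.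
Proof.
by rewrite /exp_random sum_rand_val_perm card_Sn mulKf // pnatr_eq0 -lt0n fact_gt0.
Qed.

(** * Stars, leaves and hubs *)

Definition hubs : {set 'I_14} := [set j : 'I_14 | (7 <= j)%N].

Lemma card_hubs : #|hubs| = 7%N.
Proof.
by rewrite cardsE -sum1_card -(big_mkord (fun i => 7 <= i)%N (fun _ => 1%N)) unlock.
Qed.

Inductive kind := Star | FreeLeaf | TakenLeaf | Idle.

Definition nat_of_kind k : nat :=
  match k with Star => 0 | FreeLeaf => 1 | TakenLeaf => 2 | Idle => 3 end.
Definition kind_of_nat n : kind :=
  match n with 0 => Star | 1 => FreeLeaf | 2 => TakenLeaf | _ => Idle end.
Lemma nat_of_kindK : cancel nat_of_kind kind_of_nat. Proof. by case. Qed.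
HB.instance Definition _ := Equality.copy kind (can_type nat_of_kindK).

Definition kind_in (M B : {set 'I_14}) : kind :=
  if B == finset.set0 then Idle
  else if #|B| == 1%N then (if B \subset M then TakenLeaf else FreeLeaf) else Star.

Lemma kind_in0 M : kind_in M finset.set0 = Idle.
Proof. by rewrite /kind_in eqxx. Qed.

Lemma kind_in_set1 M v : kind_in M [set v] = if v \in M then TakenLeaf else FreeLeaf.
Proof. by rewrite /kind_in -cards_eq0 cards1 finset.sub1set. Qed.

Lemma card_star p : p \notin hubs -> #|p |: hubs| = 8%N.
Proof. by move=> p_hub; rewrite cardsU1 p_hub card_hubs. Qed.

Lemma kind_in_star M p : p \notin hubs -> kind_in M (p |: hubs) = Star.
Proof. by move=> p_hub; rewrite /kind_in card_star // -cards_eq0 card_star. Qed.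

Lemma kind_in_setU1 w M B : B != [set w] -> kind_in (w |: M) B = kind_in M B.
Proof.
have [/cards1P[u ->] uw|B1 _] := boolP (#|B| == 1%N); last by rewrite /kind_in (negbTE B1).
by rewrite !kind_in_set1 !inE; have /negbTE-> : u != w by apply: contraNneq uw => ->.
Qed.

Definition nkind n (f : 'I_n -> {set 'I_14}) M k : nat := \sum_(j < n) (kind_in M (f j) == k).

Lemma nkind_lift n (f : 'I_n.+1 -> {set 'I_14}) M k i :
  nkind f M k = ((kind_in M (f i) == k) + nkind (fun j => f (lift i j)) M k)%N.
Proof. by rewrite /nkind (bigD1_ord i). Qed.

Lemma nkind_total n (f : 'I_n -> {set 'I_14}) M :
  (nkind f M Star + nkind f M FreeLeaf + nkind f M TakenLeaf + nkind f M Idle)%N = n.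
Proof.
rewrite /nkind -!big_split /= -[RHS]card_ord -sum1_card.
by apply: eq_bigr => j _; case: kind_in.
Qed.

Lemma sum_kind (V : pzSemiRingType) n (f : 'I_n -> {set 'I_14}) M (F : kind -> V) :
  \sum_(j < n) F (kind_in M (f j)) =
  (nkind f M Star)%:R * F Star + (nkind f M FreeLeaf)%:R * F FreeLeaf
  + (nkind f M TakenLeaf)%:R * F TakenLeaf + (nkind f M Idle)%:R * F Idle.
Proof.
rewrite !mulr_natl /nkind -!sumrMnr -!big_split /=.
by apply: eq_bigr => j _; case: kind_in; rewrite /= ?mulr1n ?mulr0n ?addr0 ?add0r.
Qed.

Lemma nkind_setU1 n (f : 'I_n -> {set 'I_14}) M w k :
  (forall j, f j != [set w]) -> nkind f (w |: M) k = nkind f M k.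
Proof. by move=> fw; apply: eq_bigr => j _; rewrite kind_in_setU1. Qed.

Lemma nkind_setU1_leaf n (f : 'I_n -> {set 'I_14}) (M : {set 'I_14}) w j0 (k : kind) :
  w \notin M -> f j0 = [set w] -> (forall j, j != j0 -> f j != [set w]) ->
  (nkind f (w |: M) k + (FreeLeaf == k) = nkind f M k + (TakenLeaf == k))%N.
Proof.
move=> wM fj0 fw; rewrite /nkind (bigD1 j0) // [in RHS](bigD1 j0) //= fj0.
rewrite !kind_in_set1 setU11 (negbTE wM).
under eq_bigr => j /fw fjw do rewrite kind_in_setU1 //.
by rewrite addnAC [in RHS]addnAC [(_ + (_ == k))%N]addnC.
Qed.

Lemma card_hubsD1 M w : #|hubs :\: M| = ((w \in hubs :\: M) + #|hubs :\: (w |: M)|)%N.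
Proof. by rewrite (cardsD1 w) finset.setDDl finset.setUC. Qed.

Lemma set1_neq0 (T : finType) (v : T) : [set v] != finset.set0.
Proof. by rewrite -cards_eq0 cards1. Qed.

Definition hub_state n (f : 'I_n -> {set 'I_14}) (M : {set 'I_14}) : Prop :=
  [/\ forall j, [\/ f j = finset.set0,
                    exists2 p, (p \notin hubs) && (p \notin M) & f j = p |: hubs
                  | exists2 v, v \in hubs & f j = [set v]],
      {in [pred j | f j != finset.set0] &, injective f}
    & forall v, v \in hubs :\: M -> exists j, f j = [set v]].

Lemma hub_state_skip n (f : 'I_n.+1 -> {set 'I_14}) M i :
  hub_state f M -> f i :\: M = finset.set0 -> hub_state (fun j => f (lift i j)) M.
Proof.
case=> shape inj onto fiM; split=> [j | j k gj gk /(inj _ _ gj gk)/lift_inj // | v vHM].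
  exact: shape.
have [j fj] := onto v vHM; case: (unliftP i j) => [j'|] ej; first by exists j'; rewrite -ej.
move: vHM fiM; rewrite -ej fj => /setDP[_ vM] /setP/(_ v).
by rewrite !inE eqxx (negbTE vM).
Qed.

Lemma hub_state_leaf_inj n (f : 'I_n -> {set 'I_14}) M j1 j2 v :
  hub_state f M -> f j1 = [set v] -> f j2 = [set v] -> j1 = j2.
Proof. by case=> _ inj _ e1 e2; apply: inj; rewrite ?inE ?e1 ?e2 ?set1_neq0. Qed.

Lemma hub_state_leaf n (f : 'I_n -> {set 'I_14}) M j w :
  hub_state f M -> f j = [set w] -> w \in hubs.
Proof.
case=> /(_ j) [->|[p /andP[pH _] ->]|[v vH ->]] _ _.
- by move/eqP; rewrite eq_sym (negbTE (set1_neq0 w)).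
- by move=> e; have := card_star pH; rewrite e cards1.
- by move/finset.set1_inj <-.
Qed.

Lemma hub_state_private n (f : 'I_n -> {set 'I_14}) M j w :
  hub_state f M -> w \in f j -> w \notin hubs -> f j = w |: hubs.
Proof.
case=> /(_ j) [->|[q _ ->]|[v vH ->]] _ _ wfj wH; first by rewrite inE in wfj.
  by move: wfj; rewrite finset.in_setU1 (negbTE wH) orbF => /eqP->.
by move: wfj wH; rewrite finset.in_set1 => /eqP->; rewrite vH.
Qed.

Lemma hub_state_take n (f : 'I_n.+1 -> {set 'I_14}) M i w :
  hub_state f M -> w \in f i :\: M -> hub_state (fun j => f (lift i j)) (w |: M).
Proof.
move=> fS; case: (fS) => shape inj onto /setDP[wfi wM]; split.
- move=> j.
  case: (shape (lift i j)) => [fj|[p /andP[pH pM] fj]|leaf]; [by constructor 1 | | by constructor 3].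
  constructor 2; exists p => //.
  have pw : p != w.
    apply/eqP => epw; have wH : w \notin hubs by rewrite -epw.
    have e : f (lift i j) = f i by rewrite (hub_state_private fS wfi wH) fj epw.
    have nz : f i != finset.set0 by apply/set0Pn; exists w.
    by move/eqP: (neq_lift i j); apply; apply: inj; rewrite ?inE ?e.
  by rewrite pH finset.in_setU1 negb_or pw.
- by move=> j k gj gk /(inj _ _ gj gk)/lift_inj.
- move=> v /setDP[vH]; rewrite finset.in_setU1 negb_or => /andP[vw vM].
  have [j fj] : exists j, f j = [set v] by apply: onto; rewrite finset.in_setD vM.
  case: (unliftP i j) => [j'|] ej; first by exists j'; rewrite -ej.
  by move: wfi; rewrite -ej fj finset.in_set1 => /eqP ewv; rewrite ewv eqxx in vw.
Qed.

(** * The numerical upper bound *)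

Definition scale : N := 1000000.

(* [(1 + x) * scale] times the right-hand side of the recurrence for U, given the values
   [uA], [uAH], [uL], [uT] of [scale * U] at the four successor states. *)
Definition ub_num (a x z : nat) (uA uAH uL uT : N) : N :=
  let: (a, x, z) := (N.of_nat a, N.of_nat x, N.of_nat z) in
  (a * ((1 + x) * scale + uA + x * uAH) + x * (1 + x) * (scale + uL) + z * (1 + x) * uT)%num.

Definition ub_den (a x z : nat) : N :=
  let: (a, x, z) := (N.of_nat a, N.of_nat x, N.of_nat z) in ((a + x + z) * (1 + x))%num.

Definition entry (t : seq (seq N)) (x z : nat) : N := nth 0%num (nth [::] t x) z.

(* Entries are the recurrence rounded up, layer by layer in [a]; only the check [ub_okP]
   matters for soundness. *)
Fixpoint fill_row lo up a x z k (left : N) : seq N :=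
  if k is k'.+1 then
    let u := ub_num a x z (entry lo x z) (entry lo x.-1 z.+1) (nth 0%num up z) left in
    let v := ((u + ub_den a x z - 1) / ub_den a x z)%num in
    v :: fill_row lo up a x z.+1 k' v
  else [::].

Fixpoint fill_rows lo a x k up : seq (seq N) :=
  if k is k'.+1 then let r := fill_row lo up a x 0 8 0 in r :: fill_rows lo a x.+1 k' r
  else [::].

Fixpoint ub_layer a : seq (seq N) :=
  fill_rows (if a is a'.+1 then ub_layer a' else [::]) a 0 8 [::].

Definition ub_table : seq (seq (seq N)) := Eval vm_compute in mkseq ub_layer 8.

Definition ub (a x z : nat) : N := entry (nth [::] ub_table a) x z.

Definition ub_ok (a x z : nat) : bool :=
  N.leb (ub_num a x z (ub a.-1 x z) (ub a.-1 x.-1 z.+1) (ub a x.-1 z) (ub a x z.-1))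
        (ub_den a x z * ub a x z).

Lemma ub_okP a x z : (a <= 7)%N -> (x + z <= 7)%N -> ub_ok a x z.
Proof.
have all_ok : all (fun a => all (fun x => all (fun z => (x + z <= 7)%N ==> ub_ok a x z)
                (iota 0 8)) (iota 0 8)) (iota 0 8) by vm_compute.
have in8 k : (k <= 7)%N -> k \in iota 0 8 by rewrite mem_iota.
move=> a7 xz7; have x7 : (x <= 7)%N by lia.
have z7 : (z <= 7)%N by lia.
by move: all_ok => /allP/(_ a (in8 a a7))/allP/(_ x (in8 x x7))/allP/(_ z (in8 z z7))/implyP->.
Qed.

Lemma ub_step_nat a x z : (a <= 7)%N -> (x + z <= 7)%N ->
  let k := N.to_nat scale in let u a x z := N.to_nat (ub a x z) in
  (a * (x.+1 * k + u a.-1 x z + x * u a.-1 x.-1 z.+1) + x * x.+1 * (k + u a x.-1 z)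
   + z * x.+1 * u a x z.-1 <= (a + x + z) * x.+1 * u a x z)%N.
Proof. by move=> a7 xz7; have /N.leb_le := ub_okP a7 xz7; rewrite /ub_num /ub_den; lia. Qed.

Lemma unscale_step_ineq (F : realFieldType) (a x z k uA uAH uL uT u : nat) : (0 < k)%N ->
  (a * (x.+1 * k + uA + x * uAH) + x * x.+1 * (k + uL) + z * x.+1 * uT
    <= (a + x + z) * x.+1 * u)%N ->
  a%:R * (1 + (1 + x%:R)^-1 * (uA%:R / k%:R + x%:R * (uAH%:R / k%:R)))
    + x%:R * (1 + uL%:R / k%:R) + z%:R * (uT%:R / k%:R) <= (a + x + z)%:R * (u%:R / k%:R) :> F.
Proof.
rewrite -(ltr_nat F) -(ler_nat F) !(natrM, natrD) -nat1r => k_gt0 le_scaled.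
have d_gt0 : 0 < (1 + x%:R) * k%:R :> F by rewrite mulr_gt0 // ltr_pwDl.
have le_of_eq (s t : F) : s = t -> s <= t by move->.
rewrite -(ler_pM2r d_gt0); apply: le_trans (le_trans le_scaled _); apply: le_of_eq.
  by field; rewrite !gt_eqF // ltr_pwDl.
by field; rewrite gt_eqF.
Qed.

Section UpperBound.
Variable R : realType.

Definition ubR (a x z : nat) : R := (N.to_nat (ub a x z))%:R / (N.to_nat scale)%:R.

Lemma ubR_ge0 a x z : 0 <= ubR a x z.
Proof. by rewrite divr_ge0. Qed.

Lemma ubR_step a x z : (a <= 7)%N -> (x + z <= 7)%N ->
  a%:R * (1 + (1 + x%:R)^-1 * (ubR a.-1 x z + x%:R * ubR a.-1 x.-1 z.+1))
  + x%:R * (1 + ubR a x.-1 z) + z%:R * ubR a x z.-1 <= (a + x + z)%:R * ubR a x z.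
Proof. by move=> a7 xz7; apply: unscale_step_ineq (ub_step_nat a7 xz7); rewrite /scale; lia. Qed.

Lemma ubR_770 : ubR 7 7 0 <= 21 / 2.
Proof.
have /N.leb_le le_N : N.leb (2 * ub 7 7 0) (21 * scale) by vm_compute.
have le_nat : (2 * N.to_nat (ub 7 7 0) <= 21 * N.to_nat scale)%N by lia.
have k_gt0 : (0 < N.to_nat scale)%N by rewrite /scale; lia.
(* Generalizing keeps [N.to_nat scale] from being unfolded into a unary numeral. *)
rewrite /ubR; move: (N.to_nat (ub 7 7 0)) (N.to_nat scale) le_nat k_gt0 => u k.
rewrite -(ler_nat R) -(ltr_nat R) !natrM => le_uk k_gt0.
by rewrite ler_pdivrMr //; lra.
Qed.

End UpperBound.

(** * Bounding Random from a hub state *)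

Definition census n (f : 'I_n -> {set 'I_14}) M a x z : Prop :=
  [/\ nkind f M Star = a, nkind f M FreeLeaf = x, nkind f M TakenLeaf = z
    & #|hubs :\: M| = x].

Definition kind_bound (R : realType) a x z (k : kind) : R :=
  match k with
  | Star => 1 + (1 + x%:R)^-1 * (ubR R a.-1 x z + x%:R * ubR R a.-1 x.-1 z.+1)
  | FreeLeaf => 1 + ubR R a x.-1 z
  | TakenLeaf => ubR R a x z.-1
  | Idle => ubR R a x z
  end.

Section Arrival.
Variables (R : realType) (n : nat).
Hypothesis IH : forall (g : 'I_n -> {set 'I_14}) M a x z,
  hub_state g M -> census g M a x z -> (a <= 7)%N -> (x + z <= 7)%N ->
  rom_value R g M <= ubR R a x z.
Variables (f : 'I_n.+1 -> {set 'I_14}) (M : {set 'I_14}) (a x z : nat) (i : 'I_n.+1).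
Hypotheses (fS : hub_state f M) (fC : census f M a x z).
Hypotheses (a7 : (a <= 7)%N) (xz7 : (x + z <= 7)%N).
Local Notation g := (fun j => f (lift i j)).

Lemma arrive_idle : f i = finset.set0 -> arrive (f i) (rom_value R g) M <= ubR R a x z.
Proof.
move=> fi0; have fiM : f i :\: M = finset.set0 by rewrite fi0 finset.set0D.
rewrite /arrive fiM eqxx; apply: IH (hub_state_skip fS fiM) _ a7 xz7.
case: fC; rewrite !(nkind_lift _ _ _ i) fi0 kind_in0 /= => cS cF cT cH.
by split=> //; lia.
Qed.

Lemma arrive_taken_leaf v : f i = [set v] -> v \in M ->
  arrive (f i) (rom_value R g) M <= ubR R a x z.-1.
Proof.
move=> fiv vM; have fiM : f i :\: M = finset.set0.
  by apply/eqP; rewrite finset.setD_eq0 fiv finset.sub1set.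
rewrite /arrive fiM eqxx; apply: IH (hub_state_skip fS fiM) _ a7 _; last by lia.
case: fC; rewrite !(nkind_lift _ _ _ i) fiv kind_in_set1 vM /= => cS cF cT cH.
by split=> //; lia.
Qed.

Lemma arrive_free_leaf v : f i = [set v] -> v \notin M ->
  arrive (f i) (rom_value R g) M <= 1 + ubR R a x.-1 z.
Proof.
move=> fiv vM; have vH := hub_state_leaf fS fiv.
have fiM : f i :\: M = [set v].
  by apply/finset.setP => u; rewrite fiv !inE andb_idl // => /eqP->.
have vfiM : v \in f i :\: M by rewrite fiM finset.set11.
rewrite /arrive fiM (negbTE (set1_neq0 v)) finset.big_set1 cards1 invr1 mul1r lerD2l.
apply: IH (hub_state_take fS vfiM) _ a7 _; last by lia.
have g_v j : g j != [set v].
  by apply/eqP => gjv; move/eqP: (neq_lift i j); apply; apply: hub_state_leaf_inj fS fiv gjv.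
case: fC; rewrite !(nkind_lift _ _ _ i) fiv kind_in_set1 (negbTE vM) /= => cS cF cT cH.
split; rewrite ?nkind_setU1 //; try lia.
by move: cH; rewrite (card_hubsD1 M v) finset.in_setD vM vH /=; lia.
Qed.

Lemma star_takes_private p : p \notin hubs -> p \notin M -> f i = p |: hubs ->
  rom_value R g (p |: M) <= ubR R a.-1 x z.
Proof.
move=> pH pM fip; have pfiM : p \in f i :\: M by rewrite finset.in_setD pM fip finset.setU11.
apply: IH (hub_state_take fS pfiM) _ _ xz7; last by lia.
have g_p j : g j != [set p] by apply: contraNneq pH => /(hub_state_leaf fS).
case: fC; rewrite !(nkind_lift _ _ _ i) fip kind_in_star //= => cS cF cT cH.
split; rewrite ?nkind_setU1 //; try lia.
by rewrite -cH (card_hubsD1 M p) finset.in_setD (negbTE pH) andbF.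
Qed.

Lemma star_takes_hub p u : p \notin hubs -> f i = p |: hubs -> u \in hubs :\: M ->
  rom_value R g (u |: M) <= ubR R a.-1 x.-1 z.+1.
Proof.
move=> pH fip uHM.
have /finset.setDP[uH uM] := uHM.
have ufiM : u \in f i :\: M by rewrite finset.in_setD uM fip finset.setU1r.
have x_gt0 : (0 < x)%N by case: fC => _ _ _ <-; apply/card_gt0P; exists u.
apply: IH (hub_state_take fS ufiM) _ _ _; try lia.
have [j0 fj0] : exists j0, f j0 = [set u] by case: fS => _ _; apply.
case: (unliftP i j0) => [j0'|] ej0; last first.
  by move: fj0; rewrite ej0 fip => e; have := card_star pH; rewrite e cards1.
have gj0 : g j0' = [set u] by rewrite -ej0.
have g_u j : j != j0' -> g j != [set u].
  apply: contra_neq => gju; apply: (@lift_inj _ i).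
  by rewrite -ej0; apply: hub_state_leaf_inj fS gju fj0.
have shift k := nkind_setU1_leaf k uM gj0 g_u.
case: fC; rewrite !(nkind_lift _ _ _ i) fip kind_in_star //= => cS cF cT cH.
move: (shift Star) (shift FreeLeaf) (shift TakenLeaf) => /= s0 s1 s2.
split; try lia.
by move: cH; rewrite (card_hubsD1 M u) uHM /=; lia.
Qed.

Lemma arrive_star p : p \notin hubs -> p \notin M -> f i = p |: hubs ->
  arrive (f i) (rom_value R g) M <= kind_bound R a x z Star.
Proof.
move=> pH pM fip; have pHM' : p \notin hubs :\: M by rewrite finset.in_setD (negbTE pH) andbF.
have fiM : f i :\: M = p |: (hubs :\: M).
  rewrite fip finset.setDUl; congr (_ :|: _).
  by apply/finset.setP => u; rewrite !inE andb_idl // => /eqP->.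
have fiM0 : (f i :\: M == finset.set0) = false.
  by apply/negbTE/set0Pn; exists p; rewrite fiM finset.setU11.
case: (fC) => _ _ _ cH.
rewrite /arrive fiM0 fiM finset.big_setU1 //= cardsU1 pHM' cH natrD mulr1n lerD2l.
apply: ler_wpM2l; first by rewrite invr_ge0 addr_ge0 ?ler0n.
apply: lerD; first exact: star_takes_private.
apply: le_trans (ler_sum _ (fun u uHM => star_takes_hub pH fip uHM)) _.
by rewrite sumr_const cH mulr_natl.
Qed.

Lemma arrive_le : arrive (f i) (rom_value R g) M <= kind_bound R a x z (kind_in M (f i)).
Proof.
case: (fS) => /(_ i) [fi0|[p /andP[pH pM] fip]|[v _ fiv]] _ _.
- by rewrite {2}fi0 kind_in0; apply: arrive_idle fi0.
- by rewrite {2}fip kind_in_star //; apply: arrive_star pH pM fip.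
- rewrite {2}fiv kind_in_set1; case: ifPn => vM.
    exact: arrive_taken_leaf vM.
  exact: arrive_free_leaf vM.
Qed.

End Arrival.

Lemma rom_value_le (R : realType) n (f : 'I_n -> {set 'I_14}) M a x z :
  hub_state f M -> census f M a x z -> (a <= 7)%N -> (x + z <= 7)%N ->
  rom_value R f M <= ubR R a x z.
Proof.
elim: n f M a x z => [|n IH] f M a x z fS fC a7 xz7; first exact: ubR_ge0.
have total := nkind_total f M; case: (fC) => cS cF cT _.
rewrite /= -(ler_pM2l (_ : 0 < n.+1%:R)) ?ltr0n // mulrA mulfV ?pnatr_eq0 // mul1r.
apply: le_trans (ler_sum _ (fun i _ => arrive_le IH i fS fC a7 xz7)) _.
rewrite sum_kind cS cF cT /=.
have -> : n.+1%:R = (a + x + z)%:R + (nkind f M Idle)%:R :> R.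
  by rewrite -natrD -cS -cF -cT total.
by rewrite mulrDl; apply: lerD; [exact: ubR_step | exact: lexx].
Qed.

(** * The hard instance *)

Definition hub_nbr n (i : 'I_n) : {set 'I_14} :=
  if (i < 7)%N then inord i |: hubs else if (i < 14)%N then [set inord i] else finset.set0.

Definition hub_instance n : instance n := @Instance n 14 (@hub_nbr n).

Lemma mem_hub_nbr n (i : 'I_n) (w : 'I_14) :
  (w \in hub_nbr i) = ((w : nat) == i) && (i < 14)%N || (i < 7)%N && (7 <= w)%N.
Proof.
rewrite /hub_nbr; case: ifP => i7.
  have i14 : (i < 14)%N by lia.
  by rewrite !inE -val_eqE /= inordK // i14 andbT.
case: ifP => i14; last by rewrite inE andbF.
by rewrite inE -val_eqE /= inordK // !andbT orbF.
Qed.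

Lemma hub_nbr_neq0 n (i : 'I_n) : hub_nbr i != finset.set0 -> (i < 14)%N.
Proof. by rewrite /hub_nbr; case: ifP => [|_]; [lia | case: ifP; rewrite ?eqxx]. Qed.

Lemma own_hub_nbr n (i : 'I_n) : (i < 14)%N -> (inord i : 'I_14) \in hub_nbr i.
Proof. by move=> i14; rewrite mem_hub_nbr inordK // eqxx i14. Qed.

Lemma hub_state_init n : (14 <= n)%N -> hub_state (@hub_nbr n) finset.set0.
Proof.
move=> n14; split.
- move=> j; rewrite /hub_nbr; case: ifP => j7.
    constructor 2; exists (inord j) => //.
    by rewrite !inE inordK ?andbT; lia.
  case: ifP => j14; [constructor 3 | by constructor 1].
  by exists (inord j); rewrite // inE inordK; lia.
- move=> j k; rewrite !inE => j0 _ ejk.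
  have j14 := hub_nbr_neq0 j0; have k14 : (k < 14)%N by apply: hub_nbr_neq0; rewrite -ejk.
  have jk : (inord j : 'I_14) \in hub_nbr k by rewrite -ejk own_hub_nbr.
  have kj : (inord k : 'I_14) \in hub_nbr j by rewrite ejk own_hub_nbr.
  by move: jk kj; rewrite !mem_hub_nbr !inordK // => jk kj; apply: ord_inj; lia.
- move=> v; rewrite finset.setD0 inE => v7.
  have vn : (v < n)%N by apply: leq_trans (ltn_ord v) n14.
  exists (Ordinal vn); rewrite /hub_nbr /= ltn_ord ifN; last by rewrite -leqNgt.
  by rewrite inord_val.
Qed.

Definition hub_kind (i : nat) : kind :=
  if (i < 7)%N then Star else if (i < 14)%N then FreeLeaf else Idle.

Lemma kind_in_hub_nbr n (i : 'I_n) : kind_in finset.set0 (hub_nbr i) = hub_kind i.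
Proof.
rewrite /hub_nbr /hub_kind; case: ifP => i7.
  by rewrite kind_in_star // inE inordK; lia.
by case: ifP => _; rewrite ?kind_in0 // kind_in_set1 inE.
Qed.

Lemma nkind_hub_nbr n k : (14 <= n)%N -> k != Idle ->
  nkind (@hub_nbr n) finset.set0 k = (\sum_(0 <= i < 14) (hub_kind i == k))%N.
Proof.
move=> n14 kI; rewrite /nkind.
rewrite (eq_bigr (fun i : 'I_n => (hub_kind i == k) : nat)) => [|i _]; last first.
  by rewrite kind_in_hub_nbr.
rewrite -(big_mkord xpredT (fun i => (hub_kind i == k) : nat)) (@big_cat_nat _ _ _ 14) //=.
rewrite [X in (_ + X)%N]big1_seq ?addn0 // => i /andP[_]; rewrite mem_index_iota => /andP[i14 _].
by rewrite /hub_kind ltnNge (leq_trans _ i14) // ltnNge i14 eq_sym (negbTE kI).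
Qed.

Lemma census_init n : (14 <= n)%N -> census (@hub_nbr n) finset.set0 7 7 0.
Proof.
by move=> n14; split; rewrite ?nkind_hub_nbr // ?finset.setD0 ?card_hubs // unlock.
Qed.

Lemma opt_hub_instance n : (14 <= n)%N -> (14 <= opt (hub_instance n))%N.
Proof.
move=> n14; pose F : {set 'I_n * 'I_14} := [set (widen_ord n14 w, w) | w : 'I_14].
have cardF : #|F| = 14%N by rewrite card_imset ?cardsT ?card_ord // => w1 w2 [].
have matchF : is_matching (I := hub_instance n) F.
  apply/andP; split; apply/forallP => e; apply/implyP => /imsetP[w _ ->] /=.
    by rewrite mem_hub_nbr /= eqxx ltn_ord.
  apply/forallP => e'; apply/implyP => /imsetP[w' _ ->] /=.
  by apply/implyP => /orP[/eqP/(congr1 val)/= /val_inj|/eqP] ->.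
by rewrite -cardF; exact: (@leq_bigmax_cond {set 'I_n * 'I_14} _ (fun F => #|F|) _ matchF).
Qed.

Lemma ratio_ge0 (R : realType) n (I : instance n) : 0 <= Defs.ratio R I.
Proof.
have rand_val_ge0 m (s : seq {set 'I_m}) M : 0 <= rand_val R s M.
  elim: s M => [|B s IH] M //=; case: ifP => _ //.
  by rewrite addr_ge0 // mulr_ge0 ?invr_ge0 ?sumr_ge0.
by rewrite divr_ge0 // mulr_ge0 ?invr_ge0 ?sumr_ge0.
Qed.

Lemma ratio_hub_instance (R : realType) n :
  (14 <= n)%N -> Defs.ratio R (hub_instance n) <= 3 / 4.
Proof.
move=> n14; have opt14 := opt_hub_instance n14.
have E_le : exp_random R (hub_instance n) <= 21 / 2.
  rewrite exp_random_rom; apply: le_trans (ubR_770 R).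
  by apply: rom_value_le; [exact: hub_state_init | exact: census_init | |].
rewrite /ratio ler_pdivrMr ?ltr0n; last by apply: leq_trans opt14.
by move: opt14; rewrite -(ler_nat R) => opt14; lra.
Qed.

Lemma ratio_inf_ge0 (R : realType) n : 0 <= ratio_inf R n.
Proof.
rewrite /ratio_inf; have [[r Sr]|S0] := pselect ([set r : R | exists I : instance n,
  (0 < opt I)%N /\ Defs.ratio R I = r] !=set0)%classic.
  by apply: lb_le_inf; [exists r | move=> _ [I [_ <-]]; exact: ratio_ge0].
by move/set0P/negP: S0 => /negPn/eqP->; rewrite inf0.
Qed.

Lemma ratio_inf_le (R : realType) n : (14 <= n)%N -> ratio_inf R n <= 3 / 4.
Proof.
move=> n14; apply: le_trans (ratio_hub_instance R n14).
apply: ge_inf; first by exists 0 => _ [I [_ <-]]; exact: ratio_ge0.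
by exists (hub_instance n); split=> //; apply: leq_trans (opt_hub_instance n14).
Qed.

Lemma limn_inf_le_eventually (R : realType) (u : R^nat) (N : nat) (c : R) :
  has_lbound (range u) -> (forall n, (N <= n)%N -> u n <= c) -> limn_inf u <= c.
Proof.
move=> u_lb u_le; have infs_le n : infs u n <= c.
  apply: le_trans (u_le (maxn n N) (leq_maxr _ _)); apply: ge_inf.
    by case: u_lb => l u_l; exists l => _ [k _ <-]; apply: u_l; exists k.
  by exists (maxn n N) => //=; rewrite leq_maxl.
have infs_cvg : cvgn (infs u).
  apply: nondecreasing_is_cvgn; first exact: nondecreasing_infs.
  by exists c => _ [n _ <-].
by apply: limr_le => //; apply: nearW.
Qed.

Theorem theorem9 (R : realType) : asymptotic_ratio_random R <= 3 / 4.
Proof.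
apply: (limn_inf_le_eventually (N := 14)); last exact: ratio_inf_le.
by exists 0 => _ [n _ <-]; exact: ratio_inf_ge0.
Qed.
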